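(* Let $G$ and $G'$ be two well-formed abstract GUI states. Then $\mathrm{Eq}(G,G')$ is not derivable if and only if $\mathrm{Ineq}(G,G')$ is derivable.
   Context: Abstract GUI states (AGS) are given by the grammar: a GUI state $G$ is a list of elements $Es$; a list of elements is either the empty list $[]$ or $E : Es$ (head $E$, tail $Es$), and $[E_1,\dots,E_n]$ abbreviates $E_1:\dots:E_n:[]$; an element is a pair $E=(As,Es)$ of a finite set $As$ of attributes and a list $Es$ of child elements; an attribute is a key-value pair $A=(K,V)$ where keys and values are strings. An AGS is well-formed iff for every attribute set $As$ occurring in it (at any depth), the keys of the attributes in $As$ are pairwise distinct. Equality $\mathrm{Eq}$ is the least relation (on element lists, elements, attribute sets and attributes) closed under the rules: (Es-Eq1) $\mathrm{Eq}([],[])$. (Es-Eq2) if $Es=[E_1,\dots,E_n]$, $Es'=[E_1',\dots,E_n']$ and $\mathrm{Eq}(E_i,E_i')$ for $i=1,\dots,n$, then $\mathrm{Eq}(Es,Es')$. (As-Eq1) $\mathrm{Eq}(\{\},\{\})$. (As-Eq2) if $As=\{A_1,\dots,A_n\}$, $As'=\{A_1',\dots,A_n'\}$ and $\mathrm{Eq}(A_i,A_i')$ for $i=1,\dots,n$, then $\mathrm{Eq}(As,As')$. (E-Eq) if $\mathrm{Eq}(As,As')$ and $\mathrm{Eq}(Es,Es')$, then $\mathrm{Eq}((As,Es),(As',Es'))$. (A-Eq) if $K=K'$ and $V=V'$, then $\mathrm{Eq}((K,V),(K',V'))$. Inequality $\mathrm{Ineq}$ is the least relation closed under the rules: (Es-Ineq)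 if $Es=[E_1,\dots,E_n]$, $Es'=[E_1',\dots,E_m']$ and ($n\neq m$ or there is $i\in\{1,\dots,\max(n,m)\}$ with $\mathrm{Ineq}(E_i,E_i')$), then $\mathrm{Ineq}(Es,Es')$. (As-Ineq) if $As=\{A_1,\dots,A_n,B_1,\dots,B_m\}\cup\{(K_1,V_1),\dots,(K_p,V_p)\}$ and $As'=\{A_1',\dots,A_n',B_1',\dots,B_m'\}\cup\{(K_1',V_1'),\dots,(K_q',V_q')\}$, with $\mathrm{Eq}(A_i,A_i')$ for $i=1,\dots,n$, $\mathrm{Ineq}(B_j,B_j')$ for $j=1,\dots,m$, $\{K_1,\dots,K_p\}\cap\{K_1',\dots,K_q'\}=\emptyset$, and ($\max(p,q)\ge 1$ or $m\ge 1$), then $\mathrm{Ineq}(As,As')$. (E-Ineq) if $\mathrm{Ineq}(As,As')$ or $\mathrm{Ineq}(Es,Es')$, then $\mathrm{Ineq}((As,Es),(As',Es'))$. (A-Ineq) if $K=K'$ and $V\neq V'$, then $\mathrm{Ineq}((K,V),(K',V'))$. For GUI states (which are element lists), $\mathrm{Eq}(G,G')$ and $\mathrm{Ineq}(G,G')$ are the corresponding relations on element lists. *)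

From Stdlib Require Import String List Permutation.
Import ListNotations.

Definition key := string.
Definition value := string.
Definition attr : Type := (key * value)%type.

(* A finite set of attributes is represented by a list; the set
   {A_1,...,A_n} (with the A_i listed without repetition) corresponds to any
   permutation of [A_1;...;A_n].  Well-formedness (distinct keys) makes the
   lists duplicate-free, so this representation is canonical up to order. *)
Definition attrs : Type := list attr.

Inductive elem : Type :=
| Elem : attrs -> list elem -> elem.

Definition gui : Type := list elem.

Inductive wf_elem : elem -> Prop :=
| wf_Elem : forall (As : attrs) (Es : list elem),
    NoDup (map fst As) ->
    (forall e, In e Es -> wf_elem e) ->
    wf_elem (Elem As Es).

Definition wf_gui (G : gui) : Prop := forall e, In e G -> wf_elem e.

Inductive EqA : attr -> attr -> Prop :=
| A_Eq : forall K V K' V', K = K' -> V = V' -> EqA (K, V) (K', V').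

Inductive EqAs : attrs -> attrs -> Prop :=
| As_Eq1 : EqAs [] []
| As_Eq2 : forall (As As' L L' : attrs),
    Permutation As L -> Permutation As' L' ->
    Forall2 EqA L L' ->
    EqAs As As'.

Inductive EqEs : list elem -> list elem -> Prop :=
| Es_Eq1 : EqEs [] []
| Es_Eq2 : forall (Es Es' : list elem),
    length Es = length Es' ->
    (forall i e e', nth_error Es i = Some e -> nth_error Es' i = Some e' ->
                    EqE e e') ->
    EqEs Es Es'
with EqE : elem -> elem -> Prop :=
| E_Eq : forall As As' Es Es',
    EqAs As As' -> EqEs Es Es' -> EqE (Elem As Es) (Elem As' Es').

Inductive IneqA : attr -> attr -> Prop :=
| A_Ineq : forall K V K' V', K = K' -> V <> V' -> IneqA (K, V) (K', V').

(* (As-Ineq): As = {A_i} u {B_j} u {(K_k,V_k)}, As' likewise (disjoint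
   enumerations), Eq(A_i,A_i'), Ineq(B_j,B_j'), key sets of the last parts
   disjoint, and (max(p,q) >= 1 or m >= 1). *)
Inductive IneqAs : attrs -> attrs -> Prop :=
| As_Ineq : forall (As As' LA LA' LB LB' LK LK' : attrs),
    Permutation As (LA ++ LB ++ LK) ->
    Permutation As' (LA' ++ LB' ++ LK') ->
    Forall2 EqA LA LA' ->
    Forall2 IneqA LB LB' ->
    (forall k, In k (map fst LK) -> ~ In k (map fst LK')) ->
    (1 <= length LK \/ 1 <= length LK' \/ 1 <= length LB) ->
    IneqAs As As'.

Inductive IneqEs : list elem -> list elem -> Prop :=
| Es_Ineq_len : forall (Es Es' : list elem),
    length Es <> length Es' -> IneqEs Es Es'
| Es_Ineq_elem : forall (Es Es' : list elem) (i : nat) (e e' : elem),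
    nth_error Es i = Some e -> nth_error Es' i = Some e' ->
    IneqE e e' -> IneqEs Es Es'
with IneqE : elem -> elem -> Prop :=
| E_Ineq_As : forall As As' Es Es',
    IneqAs As As' -> IneqE (Elem As Es) (Elem As' Es')
| E_Ineq_Es : forall As As' Es Es',
    IneqEs Es Es' -> IneqE (Elem As Es) (Elem As' Es').

(* Two attribute lists can always be split into a common part, pairs with a
   common key but different values, and leftovers whose keys occur on one side
   only; unless the last two parts are empty (and the lists are then
   permutations of each other, i.e. Eq), this split is an As-Ineq derivation.
   Conversely, when the keys of one side are distinct, an As-Ineq derivation
   between permutations is impossible: after cancelling the common part, a
   pair in the second part would give one key two values on that side, and
   leftovers would have to reappear on the other side.  Nested induction on
   elements lifts both facts to element lists, where Eq is pointwise Eq and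
   Ineq is a length mismatch or a pointwise Ineq. *)
From Stdlib Require Import String List Permutation Lia.
Import ListNotations.

Lemma EqA_iff_eq (a b : attr) : EqA a b <-> a = b.
Proof.
  split.
  - now intros [K V K' V' -> ->].
  - intros ->. destruct b. now constructor.
Qed.

Lemma Forall2_EqA_iff_eq (L L' : attrs) : Forall2 EqA L L' <-> L = L'.
Proof.
  split.
  - induction 1 as [|a a' L L' Ha _ ->]; [reflexivity|].
    now apply EqA_iff_eq in Ha as ->.
  - intros <-. induction L; constructor; [now apply EqA_iff_eq | assumption].
Qed.

Lemma EqAs_iff_Permutation (As As' : attrs) : EqAs As As' <-> Permutation As As'.
Proof.
  split.
  - intros [|? ? L L' P P' HL]; [constructor|].
    apply Forall2_EqA_iff_eq in HL as <-. now rewrite P, P'.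
  - intros P. apply (As_Eq2 As As' As As); [reflexivity | now symmetry |].
    now apply Forall2_EqA_iff_eq.
Qed.

Lemma attrs_split (As As' : attrs) : exists LA LB LB' LK LK',
  Permutation As (LA ++ LB ++ LK) /\ Permutation As' (LA ++ LB' ++ LK') /\
  Forall2 IneqA LB LB' /\ (forall k, In k (map fst LK) -> ~ In k (map fst LK')).
Proof.
  revert As'. induction As as [|[k v] As IH]; intros As'.
  { now exists [], [], [], [], As'. }
  destruct (in_dec string_dec k (map fst As')) as [Hk|Hk].
  - apply in_map_iff in Hk as ([k0 v'] & Ek & Hin). simpl in Ek. subst k0.
    apply in_split in Hin as (l1 & l2 & ->).
    destruct (IH (l1 ++ l2)) as (LA & LB & LB' & LK & LK' & P & P' & HB & HK).
    destruct (string_dec v v') as [<-|Hv].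
    + exists ((k, v) :: LA), LB, LB', LK, LK'.
      repeat split; [now apply perm_skip | | assumption | assumption].
      rewrite <- Permutation_middle, P'. reflexivity.
    + exists LA, ((k, v) :: LB), ((k, v') :: LB'), LK, LK'.
      repeat split; [| | now repeat constructor | assumption].
      * now apply Permutation_cons_app.
      * rewrite <- Permutation_middle, P'. apply Permutation_middle.
  - destruct (IH As') as (LA & LB & LB' & LK & LK' & P & P' & HB & HK).
    exists LA, LB, LB', ((k, v) :: LK), LK'.
    repeat split; [| assumption | assumption |].
    + rewrite app_assoc. apply Permutation_cons_app. now rewrite <- app_assoc.
    + intros k' [<-|Hk'] Hin'; [|now apply (HK k')].
      apply Hk. rewrite (Permutation_map fst P'), !map_app, !in_app_iff. auto.
Qed.

Lemma EqAs_or_IneqAs (As As' : attrs) : EqAs As As' \/ IneqAs As As'.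
Proof.
  destruct (attrs_split As As') as (LA & LB & LB' & LK & LK' & P & P' & HB & HK).
  assert (HA : Forall2 EqA LA LA) by now apply Forall2_EqA_iff_eq.
  destruct LB as [|b LB], LK as [|x LK], LK' as [|y LK'];
    try (right; apply (As_Ineq As As' LA LA _ _ _ _ P P' HA HB HK); simpl; lia).
  left. inversion HB; subst. apply EqAs_iff_Permutation.
  rewrite P, P'. reflexivity.
Qed.

Lemma key_functional (l : attrs) (k : key) (v v' : value) :
  NoDup (map fst l) -> In (k, v) l -> In (k, v') l -> v = v'.
Proof.
  induction l as [|a l IH]; [now simpl|].
  intros Hnd. inversion_clear Hnd as [|? ? Hnin Hnd'].
  intros [->|H] [E|H']; [now injection E | | | now apply IH].
  - exfalso. apply Hnin. exact (in_map fst _ _ H').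
  - exfalso. subst a. apply Hnin. exact (in_map fst _ _ H).
Qed.

Lemma disjoint_keys_Permutation_nil (L L' : attrs) :
  (forall k, In k (map fst L) -> ~ In k (map fst L')) -> Permutation L L' -> L = [].
Proof.
  intros HK P. destruct L as [|a L]; [reflexivity | exfalso].
  apply (HK (fst a)); [now left|].
  apply in_map. exact (Permutation_in a P (in_eq a L)).
Qed.

Lemma IneqAs_not_Permutation (As As' : attrs) :
  NoDup (map fst As') -> Permutation As As' -> ~ IneqAs As As'.
Proof.
  intros Hnd P I. destruct I as [? ? LA LA' LB LB' LK LK' PA PA' HA HB HK Hlen].
  apply Forall2_EqA_iff_eq in HA as <-.
  assert (Prest : Permutation (LB ++ LK) (LB' ++ LK')).
  { apply (Permutation_app_inv_l LA). now rewrite <- PA, <- PA'. }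
  destruct HB as [|[k v] [k' v'] LB LB' Hb HB].
  - simpl in *. apply disjoint_keys_Permutation_nil in Prest as Hnil; [|exact HK].
    subst LK. apply Permutation_nil in Prest as ->. simpl in Hlen. lia.
  - inversion_clear Hb as [? ? ? ? Ek Hv]. subst k'. apply Hv.
    assert (Hnd' : NoDup (map fst (((k, v') :: LB') ++ LK'))).
    { apply (NoDup_app_remove_l (map fst LA)). rewrite <- map_app.
      exact (Permutation_NoDup (Permutation_map fst PA') Hnd). }
    apply (key_functional _ k v v' Hnd'); [|now left].
    exact (Permutation_in _ Prest (in_eq _ _)).
Qed.

Definition elem_nested_ind (P : elem -> Prop)
  (H : forall As Es, Forall P Es -> P (Elem As Es)) : forall e, P e :=
  fix go e :=
    match e with
    | Elem As Es =>
        H As Es ((fix go_list Es : Forall P Es :=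
                    match Es with
                    | [] => Forall_nil P
                    | e :: Es => Forall_cons e (go e) (go_list Es)
                    end) Es)
    end.

Lemma Forall2_iff_nth_error {A B} (R : A -> B -> Prop) (l : list A) (l' : list B) :
  Forall2 R l l' <-> length l = length l' /\
    forall i x y, nth_error l i = Some x -> nth_error l' i = Some y -> R x y.
Proof.
  split.
  - induction 1 as [|x y l l' Hxy _ [Hlen IH]]; split; simpl; auto.
    + now intros [|].
    + intros [|i] x' y' Hx Hy; [| exact (IH i x' y' Hx Hy)].
      injection Hx as <-. injection Hy as <-. exact Hxy.
  - revert l'. induction l as [|x l IH]; intros [|y l'] [Hlen Hnth]; try discriminate.
    + constructor.
    + constructor; [now apply (Hnth 0) | apply IH].
      split; [now injection Hlen | intros i; exact (Hnth (S i))].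
Qed.

Lemma EqEs_iff_Forall2 (Es Es' : list elem) : EqEs Es Es' <-> Forall2 EqE Es Es'.
Proof.
  rewrite Forall2_iff_nth_error. split.
  - intros E. destruct E as [|Es Es' Hlen Hnth]; [split; [reflexivity | now intros []] | now split].
  - intros [Hlen Hnth]. now apply Es_Eq2.
Qed.

Lemma IneqEs_cons (e e' : elem) (Es Es' : list elem) :
  IneqEs Es Es' -> IneqEs (e :: Es) (e' :: Es').
Proof.
  intros I. destruct I as [Es Es' Hlen | Es Es' i x x' Hx Hx' Hxx'].
  - apply Es_Ineq_len. simpl. congruence.
  - now apply (Es_Ineq_elem _ _ (S i) x x').
Qed.

Lemma EqEs_or_IneqEs (Es Es' : list elem) :
  Forall (fun e => forall e', EqE e e' \/ IneqE e e') Es ->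
  EqEs Es Es' \/ IneqEs Es Es'.
Proof.
  rewrite EqEs_iff_Forall2. intros Htot. revert Es'.
  induction Htot as [|e Es He _ IH]; intros [|e' Es'].
  - left. constructor.
  - right. now apply Es_Ineq_len.
  - right. now apply Es_Ineq_len.
  - destruct (He e') as [E|I]; [| right; now apply (Es_Ineq_elem _ _ 0 e e')].
    destruct (IH Es') as [F|I]; [left; now constructor | right; now apply IneqEs_cons].
Qed.

Lemma EqEs_IneqEs_witness (Es Es' : list elem) :
  EqEs Es Es' -> IneqEs Es Es' -> exists i e e',
    nth_error Es i = Some e /\ nth_error Es' i = Some e' /\ EqE e e' /\ IneqE e e'.
Proof.
  rewrite EqEs_iff_Forall2, Forall2_iff_nth_error.
  intros [Hlen Hnth] I. destruct I as [Es Es' Hlen' | Es Es' i e e' He He' I]; [contradiction|].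
  exists i, e, e'. eauto.
Qed.

Lemma EqE_or_IneqE (e e' : elem) : EqE e e' \/ IneqE e e'.
Proof.
  revert e'. induction e as [As Es IH] using elem_nested_ind. intros [As' Es'].
  destruct (EqAs_or_IneqAs As As') as [A|A]; [| right; now apply E_Ineq_As].
  destruct (EqEs_or_IneqEs Es Es' IH) as [C|C].
  - left. now constructor.
  - right. now apply E_Ineq_Es.
Qed.

Lemma EqE_IneqE_exclusive (e e' : elem) :
  wf_elem e -> wf_elem e' -> EqE e e' -> IneqE e e' -> False.
Proof.
  revert e'. induction e as [As Es IH] using elem_nested_ind. intros [As' Es'] W W' E I.
  inversion_clear W as [? ? _ Wc]. inversion_clear W' as [? ? Hnd' Wc'].
  inversion_clear E as [? ? ? ? A C].
  inversion_clear I as [? ? ? ? IA | ? ? ? ? IC].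
  - exact (IneqAs_not_Permutation As As' Hnd' (proj1 (EqAs_iff_Permutation _ _) A) IA).
  - destruct (EqEs_IneqEs_witness Es Es' C IC) as (i & x & x' & Hx & Hx' & Ex & Ix).
    rewrite Forall_forall in IH.
    exact (IH x (nth_error_In _ _ Hx) x' (Wc x (nth_error_In _ _ Hx))
              (Wc' x' (nth_error_In _ _ Hx')) Ex Ix).
Qed.

Theorem mainTheorem1 (G G' : gui) :
  wf_gui G -> wf_gui G' -> (~ EqEs G G' <-> IneqEs G G').
Proof.
  intros W W'. split.
  - intros NE. destruct (EqEs_or_IneqEs G G') as [E|I]; [| contradiction | assumption].
    apply Forall_forall. intros e _ e'. apply EqE_or_IneqE.
  - intros I E.
    destruct (EqEs_IneqEs_witness G G' E I) as (i & e & e' & He & He' & Ee & Ie).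
    exact (EqE_IneqE_exclusive e e' (W e (nth_error_In _ _ He))
             (W' e' (nth_error_In _ _ He')) Ee Ie).
Qed.
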